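(* Let the theory be one of the following: quantum many-worlds theory, unnormalised quantum many-worlds theory, or stochastic many-worlds theory. Let $p$ be a probability rule for that theory satisfying Axioms (A1)–(A3). Let $v=\sum_{n=0}^{N-1}v_n\lvert n\rangle$ be an allowed bounded state with $|v_l|>|v_k|$ for some indices $l,k$. Then $p_l(v)\ge p_k(v)$.
   Context: A linear many-worlds theory consists of the following data. The worlds are the vectors $\lvert n\rangle$, $n\in\{0,1,2,\dots\}$, of a countably infinite orthonormal basis of a real or complex vector space. A state is a vector $v=\sum_n v_n\lvert n\rangle$, and $v_n=\langle n\vert v\rangle$ is the amplitude of world $n$. A transformation is a linear operator $T$ with matrix elements $T_{ij}=\langle i\rvert T\lvert j\rangle$, acting by $v\mapsto Tv$. A theory specifies a set of allowed states and a set of allowed transformations, and every allowed transformation maps allowed states to allowed states. A state is bounded if only finitely many of its amplitudes are nonzero. The three theories are: - Quantum many-worlds theory: the allowed states are complex vectors with $\langle v\vert v\rangle=\sum_n|v_n|^2=1$, and the allowed transformations are all unitary operators. - Unnormalised quantum many-worlds theory: the allowed states are complex vectors with $0<\sum_n|v_n|^2<\infty$, and the allowed transformations are all unitary operators. - Stochastic many-worlds theory: the allowed states are real vectors with $v_n\ge0$ for all $n$ and $\sum_n v_n=1$, and the allowed transformations are the $T$ with $T_{ij}\ge0$ for all $i,j$ and $\sum_i T_{ij}=1$ for all $j$. A probability rule assigns to each allowed state $v$ a sequence $(p_n(v))_{n\ge 0}$ of nonnegative reals with $\sum_n p_n(v)=1$. The axioms are: (A1) Present state dependence: $p_n$ depends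 only on the present state $v$, so $p$ is a function of the state alone. (A2) Weak connection with amplitudes: for every allowed state $v$, $v_n=0$ implies $p_n(v)=0$. (A3) Weak connection with transformations: for every allowed state $v$ and allowed transformation $T$, and every partition of $\{0,1,2,\dots\}$ into subsets $\mathcal S_k$ such that $T_{ij}=0$ whenever $i$ and $j$ lie in different subsets, we have $\sum_{n\in\mathcal S_k}p_n(v)=\sum_{n\in\mathcal S_k}p_n(Tv)$ for every $k$. *)

From Stdlib Require Import Reals Arith.
From Coquelicot Require Import Coquelicot.
Open Scope R_scope.

Inductive theory := Quantum | UnnormQuantum | Stochastic.

(* A vector: its amplitudes v_n = <n|v>. Real vectors (stochastic theory)
   are complex vectors with zero imaginary parts. *)
Definition state := nat -> C.
(* A linear operator via its matrix elements T i j = <i|T|j>. *)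
Definition operator := nat -> nat -> C.

Definition kdelta (i j : nat) : C := if Nat.eqb i j then RtoC 1 else RtoC 0.

Definition is_real_vec (v : state) : Prop := forall n, Im (v n) = 0.

Definition allowed_state (th : theory) (v : state) : Prop :=
  match th with
  | Quantum => is_series (fun n => (Cmod (v n)) ^ 2) 1
  | UnnormQuantum => exists s, 0 < s /\ is_series (fun n => (Cmod (v n)) ^ 2) s
  | Stochastic =>
      (forall n, Im (v n) = 0 /\ 0 <= Re (v n)) /\ is_series (fun n => Re (v n)) 1
  end.

Definition unitary (T : operator) : Prop :=
  (forall j k, is_series (fun i => Cmult (Cconj (T i j)) (T i k)) (kdelta j k)) /\
  (forall i k, is_series (fun j => Cmult (T i j) (Cconj (T k j))) (kdelta i k)).

Definition stochastic_op (T : operator) : Prop :=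
  (forall i j, Im (T i j) = 0 /\ 0 <= Re (T i j)) /\
  (forall j, is_series (fun i => Re (T i j)) 1).

Definition allowed_trans (th : theory) (T : operator) : Prop :=
  match th with
  | Quantum | UnnormQuantum => unitary T
  | Stochastic => stochastic_op T
  end.

Definition acts (T : operator) (v w : state) : Prop :=
  forall i, is_series (fun j => Cmult (T i j) (v j)) (w i).

(* A probability rule: p v is a probability sequence for each allowed state.
   Axiom (A1) is built in: p is a function of the present state alone. *)
Definition prob_rule (th : theory) (p : state -> nat -> R) : Prop :=
  forall v, allowed_state th v ->
    (forall n, 0 <= p v n) /\ is_series (p v) 1.

Definition axiom_A2 (th : theory) (p : state -> nat -> R) : Prop :=
  forall v, allowed_state th v -> forall n, v n = RtoC 0 -> p v n = 0.

Definition block_sum (q : nat -> R) (blk : nat -> nat) (k : nat) : R :=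
  Series (fun n => if Nat.eqb (blk n) k then q n else 0).

(* (A3) weak connection with transformations. A partition of nat into
   (countably many) subsets S_k is given by a labelling blk : nat -> nat,
   S_k = { n | blk n = k }. *)
Definition axiom_A3 (th : theory) (p : state -> nat -> R) : Prop :=
  forall (v w : state) (T : operator),
    allowed_state th v -> allowed_trans th T -> acts T v w ->
    forall blk : nat -> nat,
      (forall i j, blk i <> blk j -> T i j = RtoC 0) ->
      forall k, block_sum (p v) blk k = block_sum (p w) blk k.

Definition bounded_state (v : state) : Prop :=
  exists N, forall n, (N <= n)%nat -> v n = RtoC 0.

From Stdlib Require Import Reals Lra Lia Arith FunctionalExtensionality.
From Coquelicot Require Import Coquelicot.
Open Scope R_scope.

(* All transformations used act as a
   2x2 block on two worlds a, b and as the identity elsewhere; the partition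
   {a,b} plus singletons is then compatible with them, so (A3) says such a
   transformation preserves p_a + p_b and every other p_c.
   1. Symmetry: if u_a = u_b and some third world c is empty, then
      p_a(u) = p_b(u).  Swapping a<->c, resp. b<->c, and (A2) give
      p_a(u) = p_c(swap_ac u) and p_b(u) = p_c(swap_bc u); the two swapped
      states differ by the swap a<->b, which fixes p_c.
   2. Splitting: if |v_l| > |v_k| and world m is empty, an allowed
      two-level transformation on {l,m} produces w with w_l = v_k.
   3. Theorem: with two fresh empty worlds m, m' (v is bounded), step 2
      gives p_l(v) = p_l(w) + p_m(w) >= p_l(w), and step 1 (using m')
      gives p_l(w) = p_k(w) = p_k(v). *)

Section FiniteSeries.
Context {K : AbsRing} {V : NormedModule K}.

Lemma is_series_single (f : nat -> V) (a : nat) :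
  (forall n, n <> a -> f n = zero) -> is_series f (f a).
Proof.
  intros Hf. unfold is_series.
  assert (Hbefore : forall n, (n < a)%nat -> sum_n f n = zero).
  { induction n; intros Hn.
    - rewrite sum_O. apply Hf. lia.
    - rewrite sum_Sn, IHn by lia. rewrite Hf by lia. apply plus_zero_l. }
  assert (Hafter : forall n, (a <= n)%nat -> sum_n f n = f a).
  { induction n; intros Hn.
    - assert (a = 0%nat) by lia. subst. apply sum_O.
    - destruct (Nat.eq_dec a (S n)) as [E|E].
      + subst. rewrite sum_Sn, Hbefore by lia. apply plus_zero_l.
      + rewrite sum_Sn, IHn by lia. rewrite (Hf (S n)) by lia. apply plus_zero_r. }
  eapply filterlim_ext_loc; [| apply filterlim_const].
  exists a. intros n Hn. symmetry. apply Hafter. exact Hn.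
Qed.

Lemma is_series_pair (f : nat -> V) (a b : nat) :
  a <> b -> (forall n, n <> a -> n <> b -> f n = zero) ->
  is_series f (plus (f a) (f b)).
Proof.
  intros Hab Hf.
  set (fa := fun n => if Nat.eqb n a then f n else zero).
  set (fb := fun n => if Nat.eqb n a then zero else f n).
  assert (Ea : fa a = f a) by (unfold fa; rewrite Nat.eqb_refl; auto).
  assert (Eb : fb b = f b) by (unfold fb; destruct (Nat.eqb_spec b a); [congruence|auto]).
  apply (is_series_ext (fun n => plus (fa n) (fb n))).
  { intros n; unfold fa, fb; destruct (Nat.eqb_spec n a);
      [apply plus_zero_r|apply plus_zero_l]. }
  rewrite <- Ea, <- Eb. apply is_series_plus; apply is_series_single.
  - intros n Hn; unfold fa; destruct (Nat.eqb_spec n a); congruence.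
  - intros n Hn; unfold fb; destruct (Nat.eqb_spec n a); auto.
Qed.
End FiniteSeries.

Lemma is_series_single_R (f : nat -> R) a :
  (forall n, n <> a -> f n = 0) -> is_series f (f a).
Proof. apply (@is_series_single R_AbsRing R_NormedModule). Qed.

Lemma is_series_pair_R (f : nat -> R) a b : a <> b ->
  (forall n, n <> a -> n <> b -> f n = 0) -> is_series f (f a + f b).
Proof. apply (@is_series_pair R_AbsRing R_NormedModule). Qed.

Lemma is_series_single_C (f : nat -> C) a :
  (forall n, n <> a -> f n = RtoC 0) -> is_series f (f a).
Proof. apply (@is_series_single C_AbsRing C_NormedModule). Qed.

Lemma is_series_pair_C (f : nat -> C) a b : a <> b ->
  (forall n, n <> a -> n <> b -> f n = RtoC 0) -> is_series f (Cplus (f a) (f b)).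
Proof. apply (@is_series_pair C_AbsRing C_NormedModule). Qed.

(* Changing two terms of a convergent real series without changing their
   sum keeps the value of the series; this is how normalisation is
   transported along two-level transformations. *)
Lemma is_series_change_pair (f g : nat -> R) s a b : a <> b ->
  (forall n, n <> a -> n <> b -> g n = f n) -> g a + g b = f a + f b ->
  is_series f s -> is_series g s.
Proof.
  intros Hab Hout Hpair Hf.
  set (d := fun n => g n - f n).
  assert (Hd : is_series d (d a + d b)).
  { apply is_series_pair_R; auto. intros n Ha Hb; unfold d; rewrite Hout; auto; ring. }
  replace (d a + d b) with 0 in Hd by (unfold d; lra).
  pose proof (is_series_plus _ _ _ _ Hf Hd) as Hs.
  replace (plus s 0) with s in Hs by (symmetry; apply (@plus_zero_r R_AbelianMonoid)).
  eapply is_series_ext; [|exact Hs]. intros n. change (f n + d n = g n). unfold d; ring.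
Qed.

(* The two-level operator with block [[x, y], [z, t]] on worlds a, b and
   the identity on all other worlds, its action on states, and the
   partition with blocks {a, b} and singletons that it respects. *)
Definition op2 (a b : nat) (x y z t : C) : operator := fun i j =>
  if Nat.eqb i a then (if Nat.eqb j a then x else if Nat.eqb j b then y else RtoC 0)
  else if Nat.eqb i b then (if Nat.eqb j a then z else if Nat.eqb j b then t else RtoC 0)
  else kdelta i j.

Definition apply2 (a b : nat) (x y z t : C) (v : state) : state := fun i =>
  if Nat.eqb i a then Cplus (Cmult x (v a)) (Cmult y (v b))
  else if Nat.eqb i b then Cplus (Cmult z (v a)) (Cmult t (v b))
  else v i.

Definition blk2 (a b : nat) (n : nat) : nat := if Nat.eqb n b then a else n.

Definition unitary2 (x y z t : C) : Prop :=
  Cplus (Cmult (Cconj x) x) (Cmult (Cconj z) z) = RtoC 1 /\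
  Cplus (Cmult (Cconj y) y) (Cmult (Cconj t) t) = RtoC 1 /\
  Cplus (Cmult (Cconj x) y) (Cmult (Cconj z) t) = RtoC 0 /\
  Cplus (Cmult (Cconj y) x) (Cmult (Cconj t) z) = RtoC 0 /\
  Cplus (Cmult x (Cconj x)) (Cmult y (Cconj y)) = RtoC 1 /\
  Cplus (Cmult z (Cconj z)) (Cmult t (Cconj t)) = RtoC 1 /\
  Cplus (Cmult x (Cconj z)) (Cmult y (Cconj t)) = RtoC 0 /\
  Cplus (Cmult z (Cconj x)) (Cmult t (Cconj y)) = RtoC 0.

Ltac case_indices :=
  repeat match goal with
  | |- context [Nat.eqb ?u ?w] => is_var u; is_var w; destruct (Nat.eqb_spec u w)
  end; subst; try congruence.

Ltac C_ring :=
  unfold Cconj, Cmult, Cplus, RtoC; apply injective_projections; simpl; ring.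

Ltac solve_two_level :=
  intros; unfold op2, kdelta, apply2; case_indices; try assumption; try C_ring.

(* Each sum defining a matrix entry of T^dagger T, T T^dagger or T v has at
   most two nonzero terms (at a and b) away from the diagonal identity. *)
Lemma op2_unitary a b x y z t : a <> b ->
  unitary2 x y z t -> unitary (op2 a b x y z t).
Proof.
  intros Hab (U1 & U2 & U3 & U4 & R1 & R2 & R3 & R4). split.
  { intros j k. set (f := fun i => Cmult (Cconj (op2 a b x y z t i j)) (op2 a b x y z t i k)).
    destruct (Nat.eq_dec j a) as [Ja|Ja]; [|destruct (Nat.eq_dec j b) as [Jb|Jb]].
    3:{ replace (kdelta j k) with (f j) by (unfold f; solve_two_level).
        apply is_series_single_C. unfold f; solve_two_level. }
    all: destruct (Nat.eq_dec k a) as [Ka|Ka]; [|destruct (Nat.eq_dec k b) as [Kb|Kb]].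
    all: try (replace (kdelta j k) with (f k) by (unfold f; solve_two_level);
              apply is_series_single_C; unfold f; solve_two_level).
    all: replace (kdelta j k) with (Cplus (f a) (f b)) by (unfold f; solve_two_level);
         apply is_series_pair_C; [exact Hab | unfold f; solve_two_level]. }
  { intros i k. set (f := fun j => Cmult (op2 a b x y z t i j) (Cconj (op2 a b x y z t k j))).
    destruct (Nat.eq_dec i a) as [Ia|Ia]; [|destruct (Nat.eq_dec i b) as [Ib|Ib]].
    3:{ replace (kdelta i k) with (f i) by (unfold f; solve_two_level).
        apply is_series_single_C. unfold f; solve_two_level. }
    all: destruct (Nat.eq_dec k a) as [Ka|Ka]; [|destruct (Nat.eq_dec k b) as [Kb|Kb]].
    all: try (replace (kdelta i k) with (f k) by (unfold f; solve_two_level);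
              apply is_series_single_C; unfold f; solve_two_level).
    all: replace (kdelta i k) with (Cplus (f a) (f b)) by (unfold f; solve_two_level);
         apply is_series_pair_C; [exact Hab | unfold f; solve_two_level]. }
Qed.

Lemma op2_stochastic a b x y z t : a <> b ->
  Im x = 0 -> Im y = 0 -> Im z = 0 -> Im t = 0 ->
  0 <= Re x -> 0 <= Re y -> 0 <= Re z -> 0 <= Re t ->
  Re x + Re z = 1 -> Re y + Re t = 1 ->
  stochastic_op (op2 a b x y z t).
Proof.
  intros Hab I1 I2 I3 I4 P1 P2 P3 P4 S1 S2. split.
  { intros i j. unfold op2, kdelta; case_indices; simpl; split; auto; lra. }
  intros j. set (f := fun i => Re (op2 a b x y z t i j)).
  destruct (Nat.eq_dec j a) as [Ja|Ja]; [|destruct (Nat.eq_dec j b) as [Jb|Jb]].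
  3:{ replace 1 with (f j) by (unfold f; solve_two_level; simpl; auto).
      apply is_series_single_R. unfold f; solve_two_level; simpl; auto. }
  all: replace 1 with (f a + f b) by (unfold f; solve_two_level);
       apply is_series_pair_R; [exact Hab | unfold f; solve_two_level; simpl; auto].
Qed.

Lemma op2_acts a b x y z t v : a <> b -> acts (op2 a b x y z t) v (apply2 a b x y z t v).
Proof.
  intros Hab i. set (f := fun j => Cmult (op2 a b x y z t i j) (v j)).
  destruct (Nat.eq_dec i a) as [Ia|Ia]; [|destruct (Nat.eq_dec i b) as [Ib|Ib]].
  3:{ replace (apply2 a b x y z t v i) with (f i) by (unfold f; solve_two_level).
      apply is_series_single_C. unfold f; solve_two_level. }
  all: replace (apply2 a b x y z t v i) with (Cplus (f a) (f b)) by (unfold f; solve_two_level);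
       apply is_series_pair_C; [exact Hab | unfold f; solve_two_level].
Qed.

Lemma op2_respects_blk2 a b x y z t :
  forall i j, blk2 a b i <> blk2 a b j -> op2 a b x y z t i j = RtoC 0.
Proof. intros i j. unfold blk2, op2, kdelta. case_indices; reflexivity. Qed.

Lemma apply2_first a b x y z t v :
  apply2 a b x y z t v a = Cplus (Cmult x (v a)) (Cmult y (v b)).
Proof. unfold apply2. rewrite Nat.eqb_refl. reflexivity. Qed.

Lemma apply2_second a b x y z t v : a <> b ->
  apply2 a b x y z t v b = Cplus (Cmult z (v a)) (Cmult t (v b)).
Proof. intros Hab. unfold apply2. case_indices. Qed.

Lemma apply2_other a b x y z t v c : c <> a -> c <> b -> apply2 a b x y z t v c = v c.
Proof. intros Ha Hb. unfold apply2. case_indices. Qed.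

Lemma block_sum_pair q a b : a <> b -> block_sum q (blk2 a b) a = q a + q b.
Proof.
  intros Hab. unfold block_sum. apply is_series_unique.
  set (f := fun n => if Nat.eqb (blk2 a b n) a then q n else 0).
  replace (q a + q b) with (f a + f b) by (unfold f, blk2; case_indices).
  apply is_series_pair_R; auto. unfold f, blk2; intros; case_indices.
Qed.

Lemma block_sum_other q a b c : c <> a -> c <> b -> block_sum q (blk2 a b) c = q c.
Proof.
  intros Ha Hb. unfold block_sum. apply is_series_unique.
  set (f := fun n => if Nat.eqb (blk2 a b n) c then q n else 0).
  replace (q c) with (f c) by (unfold f, blk2; case_indices).
  apply is_series_single_R. unfold f, blk2; intros; case_indices.
Qed.

Lemma A3_two_level th p a b x y z t v : axiom_A3 th p -> a <> b ->
  allowed_state th v -> allowed_trans th (op2 a b x y z t) ->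
  p v a + p v b = p (apply2 a b x y z t v) a + p (apply2 a b x y z t v) b /\
  (forall c, c <> a -> c <> b -> p v c = p (apply2 a b x y z t v) c).
Proof.
  intros HA3 Hab Hv HT.
  pose proof (HA3 v _ _ Hv HT (op2_acts a b x y z t v Hab) (blk2 a b)
                (op2_respects_blk2 a b x y z t)) as E.
  split.
  - rewrite <- !block_sum_pair by auto. apply E.
  - intros c Ha Hb. rewrite <- (block_sum_other (p v) a b c),
      <- (block_sum_other (p (apply2 a b x y z t v)) a b c) by auto. apply E.
Qed.

Definition swap (a b : nat) : state -> state :=
  apply2 a b (RtoC 0) (RtoC 1) (RtoC 1) (RtoC 0).

Lemma swap_val a b v i :
  swap a b v i = v (if Nat.eqb i a then b else if Nat.eqb i b then a else i).
Proof. unfold swap, apply2. case_indices; C_ring. Qed.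

Lemma swap_allowed_trans th a b : a <> b ->
  allowed_trans th (op2 a b (RtoC 0) (RtoC 1) (RtoC 1) (RtoC 0)).
Proof.
  intros Hab. destruct th; simpl.
  1,2: apply op2_unitary; auto; repeat split; C_ring.
  apply op2_stochastic; simpl; auto; lra.
Qed.

Lemma swap_allowed_state th v a b : a <> b ->
  allowed_state th v -> allowed_state th (swap a b v).
Proof.
  intros Hab Hv.
  assert (Hmove : forall g : C -> R, forall s, is_series (fun n => g (v n)) s ->
                    is_series (fun n => g (swap a b v n)) s).
  { intros g s Hs. eapply is_series_change_pair; [exact Hab | | | exact Hs].
    - intros n Ha Hb. rewrite swap_val. case_indices.
    - rewrite !swap_val. case_indices. ring. }
  destruct th; unfold allowed_state in *.
  - exact (Hmove (fun c => Cmod c ^ 2) 1 Hv).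
  - destruct Hv as [s [Hs Hv]]. exists s.
    split; [exact Hs | exact (Hmove (fun c => Cmod c ^ 2) s Hv)].
  - destruct Hv as [Hpos Hv]. split.
    + intros n. rewrite swap_val. apply Hpos.
    + exact (Hmove Re 1 Hv).
Qed.

Lemma equal_amplitudes_equal_prob th p : axiom_A2 th p -> axiom_A3 th p ->
  forall u a b c, allowed_state th u -> a <> b -> a <> c -> b <> c ->
  u a = u b -> u c = RtoC 0 -> p u a = p u b.
Proof.
  intros HA2 HA3 u a b c Hu ab ac bc Eab Ec.
  destruct (A3_two_level th p a c _ _ _ _ u HA3 ac Hu (swap_allowed_trans th a c ac))
    as [Eac _].
  destruct (A3_two_level th p b c _ _ _ _ u HA3 bc Hu (swap_allowed_trans th b c bc))
    as [Ebc _].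
  fold (swap a c u) in Eac. fold (swap b c u) in Ebc.
  assert (Hac := swap_allowed_state th u a c ac Hu).
  destruct (A3_two_level th p b a _ _ _ _ (swap a c u) HA3 (not_eq_sym ab) Hac
              (swap_allowed_trans th b a (not_eq_sym ab))) as [_ Eba].
  fold (swap b a (swap a c u)) in Eba.
  (* Since u_a = u_b, swapping a<->b after a<->c amounts to swapping b<->c. *)
  assert (Hcompose : swap b a (swap a c u) = swap b c u).
  { apply functional_extensionality. intros i. rewrite !swap_val. case_indices. }
  rewrite Hcompose in Eba.
  rewrite (HA2 u Hu c Ec) in Eac, Ebc.
  rewrite (HA2 (swap a c u) Hac a) in Eac by (rewrite swap_val; case_indices).
  rewrite (HA2 (swap b c u) (swap_allowed_state th u b c bc Hu) b) in Ebc
    by (rewrite swap_val; case_indices).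
  rewrite (Eba c) in Eac by auto. lra.
Qed.

Lemma Cmod_sq (z : C) : Cmod z ^ 2 = fst z ^ 2 + snd z ^ 2.
Proof. unfold Cmod. rewrite pow2_sqrt; auto. nra. Qed.

(* Step 2 for quantum states: with alpha = v_k / v_l (so |alpha| < 1) and
   beta = sqrt(1 - |alpha|^2), the unitary [[alpha, -beta], [beta, conj alpha]]
   on {l, m} maps v_l to v_k and keeps the squared norm s. *)
Lemma quantum_split v l k m s : l <> m -> v m = RtoC 0 -> Cmod (v l) > Cmod (v k) ->
  is_series (fun n => Cmod (v n) ^ 2) s ->
  exists x y z t, unitary (op2 l m x y z t) /\
    is_series (fun n => Cmod (apply2 l m x y z t v n) ^ 2) s /\
    apply2 l m x y z t v l = v k.
Proof.
  intros Hlm Hm Hlk Hs.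
  assert (Hl0 : v l <> RtoC 0).
  { intros E. rewrite E, Cmod_0 in Hlk. pose proof (Cmod_ge_0 (v k)). lra. }
  set (alpha := Cdiv (v k) (v l)).
  assert (Halpha : Cmult alpha (v l) = v k) by (unfold alpha; field; auto).
  assert (Halpha1 : Cmod alpha < 1).
  { assert (E : Cmod alpha * Cmod (v l) = Cmod (v k)) by (rewrite <- Cmod_mult, Halpha; auto).
    pose proof (Cmod_ge_0 alpha). pose proof (Cmod_ge_0 (v k)). nra. }
  clearbody alpha. destruct alpha as [a1 a2].
  assert (Hsq : a1 ^ 2 + a2 ^ 2 < 1).
  { pose proof (Cmod_sq (a1, a2)) as E. simpl in E. pose proof (Cmod_ge_0 (a1, a2)). nra. }
  set (beta := sqrt (1 - (a1 ^ 2 + a2 ^ 2))).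
  assert (Hbeta : beta * beta = 1 - (a1 ^ 2 + a2 ^ 2)) by (unfold beta; apply sqrt_sqrt; lra).
  clearbody beta.
  exists (a1, a2), (RtoC (- beta)), (RtoC beta), (Cconj (a1, a2)).
  split; [| split].
  - apply op2_unitary; auto.
    repeat split; unfold Cconj, Cmult, Cplus, RtoC; apply injective_projections; simpl; nra.
  - eapply is_series_change_pair; [exact Hlm | | | exact Hs].
    + intros n Ha Hb. rewrite apply2_other; auto.
    + rewrite apply2_first, apply2_second, !Cmod_sq, Hm by auto.
      destruct (v l) as [c1 c2]. simpl. nra.
  - rewrite apply2_first, Hm, Halpha. C_ring.
Qed.

(* Step 2 for stochastic states: with alpha = v_k / v_l in [0, 1), the
   stochastic block [[alpha, 0], [1 - alpha, 1]] on {l, m} maps v_l to v_k. *)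
Lemma stochastic_split v l k m : l <> m -> v m = RtoC 0 -> Cmod (v l) > Cmod (v k) ->
  allowed_state Stochastic v ->
  exists x y z t, stochastic_op (op2 l m x y z t) /\
    allowed_state Stochastic (apply2 l m x y z t v) /\
    apply2 l m x y z t v l = v k.
Proof.
  intros Hlm Hm Hlk [Hpos Hs].
  destruct (Hpos l) as [Il Pl]. destruct (Hpos k) as [Ik Pk].
  assert (El : v l = RtoC (Re (v l))) by (unfold RtoC; rewrite <- Il; apply surjective_pairing).
  assert (Ek : v k = RtoC (Re (v k))) by (unfold RtoC; rewrite <- Ik; apply surjective_pairing).
  rewrite El, Ek, !Cmod_R, !Rabs_pos_eq in Hlk by auto.
  set (rl := Re (v l)) in *. set (rk := Re (v k)) in *.
  set (alpha := rk / rl).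
  assert (Halpha0 : 0 <= alpha) by (unfold alpha; apply Rdiv_le_0_compat; lra).
  assert (Halpha : alpha * rl = rk) by (unfold alpha; field; lra).
  assert (Halpha1 : alpha < 1) by nra.
  exists (RtoC alpha), (RtoC 0), (RtoC (1 - alpha)), (RtoC 1).
  split; [apply op2_stochastic; simpl; auto; lra |]. split; [split |].
  - intros n. destruct (Nat.eq_dec n l) as [->|nl]; [|destruct (Nat.eq_dec n m) as [->|nm]].
    + rewrite apply2_first, Hm, El. simpl. split; nra.
    + rewrite apply2_second, Hm, El by auto. simpl. split; nra.
    + rewrite apply2_other by auto. apply Hpos.
  - eapply is_series_change_pair; [exact Hlm | | | exact Hs].
    + intros n Ha Hb. rewrite apply2_other; auto.
    + rewrite apply2_first, apply2_second, Hm by auto. rewrite El at 1 2. simpl. unfold rl. nra.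
  - rewrite apply2_first, Hm, El, Ek. unfold RtoC, Cmult, Cplus; simpl. f_equal; nra.
Qed.

Lemma split_amplitude th v l k m : l <> m -> allowed_state th v -> v m = RtoC 0 ->
  Cmod (v l) > Cmod (v k) ->
  exists x y z t, allowed_trans th (op2 l m x y z t) /\
    allowed_state th (apply2 l m x y z t v) /\ apply2 l m x y z t v l = v k.
Proof.
  intros Hlm Hv Hm Hlk. destruct th; simpl in *.
  - exact (quantum_split v l k m 1 Hlm Hm Hlk Hv).
  - destruct Hv as [s [Hs Hv]].
    destruct (quantum_split v l k m s Hlm Hm Hlk Hv) as (x & y & z & t & HT & Hw & Hwl).
    exists x, y, z, t. split; [exact HT |]. split; [exists s; auto | exact Hwl].
  - exact (stochastic_split v l k m Hlm Hm Hlk Hv).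
Qed.

Theorem lemma2 (th : theory) (p : state -> nat -> R) :
  prob_rule th p -> axiom_A2 th p -> axiom_A3 th p ->
  forall v : state, allowed_state th v -> bounded_state v ->
  forall l k : nat, Cmod (v l) > Cmod (v k) -> p v l >= p v k.
Proof.
  intros HA1 HA2 HA3 v Hv [N HN] l k Hlk.
  assert (kl : k <> l) by (intros ->; lra).
  (* Two empty worlds m < m' beyond the support of v and beyond k, l. *)
  set (m := S (N + l + k)). set (m' := S m).
  assert (Hm : v m = RtoC 0) by (apply HN; unfold m; lia).
  assert (Hm' : v m' = RtoC 0) by (apply HN; unfold m', m; lia).
  assert (lm : l <> m) by (unfold m; lia).
  destruct (split_amplitude th v l k m lm Hv Hm Hlk) as (x & y & z & t & HT & Hw & Hwl).
  set (w := apply2 l m x y z t v) in *.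
  destruct (A3_two_level th p l m x y z t v HA3 lm Hv HT) as [Epair Eother].
  fold w in Epair, Eother.
  rewrite (HA2 v Hv m Hm) in Epair.
  assert (Hwm : 0 <= p w m) by (apply (HA1 w Hw)).
  rewrite (Eother k) by (unfold m; lia).
  assert (Hwk : w k = v k) by (unfold w; apply apply2_other; unfold m; lia).
  assert (Hwm' : w m' = RtoC 0) by (unfold w; rewrite apply2_other; auto; unfold m', m; lia).
  assert (Hsym : p w l = p w k).
  { apply (equal_amplitudes_equal_prob th p HA2 HA3 w l k m' Hw); auto;
      try (unfold m', m; lia). congruence. }
  lra.
Qed.
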